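(* Let $f\in F$ be strongly positive. Then $f$ can be expressed uniquely in the form $f=x_{i_n}\cdots x_{i_2}x_{i_1}$ with $n\ge0$, all $i_k\ge1$, and $i_{k+1}\ge i_k-1$ for all $k=1,\dots,n-1$.
   Context: Thompson's group $F=\langle x_0,x_1,x_2,\dots\mid x_nx_k=x_kx_{n+1}\text{ for }k<n\rangle$. An element of $F$ is strongly positive if it lies in the submonoid generated by $x_1,x_2,x_3,\dots$. Uniqueness means uniqueness of the sequence $(i_n,\dots,i_1)$. *)

From mathcomp Require Import all_boot.
Set Implicit Arguments. Unset Strict Implicit. Unset Printing Implicit Defensive.

(* Thompson's group F = < x_0, x_1, ... | x_n x_k = x_k x_{n+1} (k < n) >,
   modelled as words in the free group modulo the congruence generated by
   free cancellation and the defining relations.  A letter (i, false) is x_i,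
   (i, true) is x_i^{-1}.  A word [:: a1; ...; am] denotes the product
   a1 * a2 * ... * am (left to right). *)
Definition letter := (nat * bool)%type.
Definition word := seq letter.

Inductive Frel : word -> word -> Prop :=
| Frel_cancel (i : nat) (b : bool) : Frel [:: (i, b); (i, ~~ b)] [::]
| Frel_thompson (n k : nat) : k < n ->
    Frel [:: (n, false); (k, false)] [:: (k, false); (n.+1, false)].

Inductive Feq : word -> word -> Prop :=
| Feq_step (u v w1 w2 : word) : Frel w1 w2 -> Feq (u ++ w1 ++ v) (u ++ w2 ++ v)
| Feq_refl (w : word) : Feq w w
| Feq_sym (w1 w2 : word) : Feq w1 w2 -> Feq w2 w1
| Feq_trans (w1 w2 w3 : word) : Feq w1 w2 -> Feq w2 w3 -> Feq w1 w3.

Definition pos_word (s : seq nat) : word := [seq (i, false) | i <- s].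

Definition strongly_positive (f : word) : Prop :=
  exists w : seq nat, all (fun i => 0 < i) w /\ Feq f (pos_word w).

(* the sequence [:: i_n; ...; i_2; i_1] (for f = x_{i_n} ... x_{i_1}) satisfies
   i_{k+1} >= i_k - 1 for all consecutive entries *)
Definition normal_seq (s : seq nat) : bool :=
  all (fun i => 0 < i) s && sorted (fun a b => b.-1 <= a) s.

From mathcomp Require Import all_boot.
From mathcomp Require Import zify.

(* Existence: an adjacent pair x_a x_{c+1} with c > a violates the normal-form
   condition and can be rewritten as x_c x_a by a defining relation; this
   lowers the sum of the indices, so the rewriting terminates.
   Uniqueness: F acts on binary strings as on the Cantor set.  A normal word
   x_{i_n} ... x_{i_1} with i_n < j just inserts n ones into 1^j 0 b, which
   recovers n, while on 1^j 0 0 the first letter x_j of a normal word with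
   head j shortens the string, which recovers the head.  Cancelling the head
   and inducting gives the result. *)

(* x_0 acts on infinite binary sequences by 00b |-> 0b, 01b |-> 10b,
   1b |-> 11b; on finite strings we extend it by [0] |-> [1] to keep it
   a bijection. *)
Definition x0_act (p : seq bool) : seq bool :=
  match p with
  | [::] => [::]
  | [:: false] => [:: true]
  | false :: false :: b => false :: b
  | false :: true :: b => true :: false :: b
  | true :: b => true :: true :: b
  end.

Definition x0_inv_act (p : seq bool) : seq bool :=
  match p with
  | [::] => [::]
  | [:: true] => [:: false]
  | false :: b => false :: false :: b
  | true :: false :: b => false :: true :: b
  | true :: true :: b => true :: b
  end.

Fixpoint x_act (i : nat) (p : seq bool) : seq bool :=
  match i with
  | 0 => x0_act p
  | i'.+1 => if p is true :: q then true :: x_act i' q else p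
  end.

Fixpoint x_inv_act (i : nat) (p : seq bool) : seq bool :=
  match i with
  | 0 => x0_inv_act p
  | i'.+1 => if p is true :: q then true :: x_inv_act i' q else p
  end.

Fixpoint act (w : word) (p : seq bool) : seq bool :=
  match w with
  | [::] => p
  | (i, b) :: w' => act w' (if b then x_inv_act i p else x_act i p)
  end.

Lemma act_cat u v p : act (u ++ v) p = act v (act u p).
Proof. by elim: u p => [|[i b] u IH] p /=. Qed.

Lemma x_actK i : cancel (x_act i) (x_inv_act i).
Proof.
move=> p; elim: i p => [|i IH] [|[] q] //=; last by rewrite IH.
by case: q => [|[] r].
Qed.

Lemma x_inv_actK i : cancel (x_inv_act i) (x_act i).
Proof.
move=> p; elim: i p => [|i IH] [|[] q] //=; last by rewrite IH.
by case: q => [|[] r].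
Qed.

Lemma x_act_thompson k n p : k < n -> x_act k (x_act n p) = x_act n.+1 (x_act k p).
Proof.
elim: k n p => [|k IH] [|n] // [|[] q] //= lt_kn; last by rewrite IH.
by case: q => [|[] r].
Qed.

Lemma Frel_act w1 w2 : Frel w1 w2 -> act w1 =1 act w2.
Proof.
case=> [i [] | n k lt_kn] p /=; rewrite ?x_actK ?x_inv_actK //.
by rewrite x_act_thompson.
Qed.

Lemma Feq_act w1 w2 : Feq w1 w2 -> act w1 =1 act w2.
Proof.
elim=> [u v a b /Frel_act eq_ab | w | a b _ IH | a b c _ IH1 _ IH2] p.
- by rewrite !act_cat eq_ab.
- by [].
- by rewrite IH.
- by rewrite IH1 IH2.
Qed.

Lemma size_x_act i p : size (x_act i p) <= (size p).+1.
Proof.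
elim: i p => [|i IH] [|[] q] //=; last by rewrite ltnS IH.
by case: q => [|[] r] /=; lia.
Qed.

Lemma size_act_pos_word s p : size (act (pos_word s) p) <= size p + size s.
Proof.
elim: s p => [|i s IH] p /=; first by rewrite addn0.
by apply: leq_trans (IH _) _; rewrite addnS -addSn leq_add2r size_x_act.
Qed.

Lemma x_act_ones_lt i j b : i < j ->
  x_act i (nseq j true ++ false :: b) = nseq j.+1 true ++ false :: b.
Proof. by elim: i j => [|i IH] [|j] //= /IH ->. Qed.

Lemma x_act_ones_false_false i :
  x_act i (nseq i true ++ [:: false; false]) = nseq i true ++ [:: false].
Proof. by elim: i => //= i ->. Qed.

Definition normal_step (a b : nat) : bool := b.-1 <= a.

Lemma act_normal_ones s j b : sorted normal_step s ->
  (if s is i :: _ then i < j else true) ->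
  act (pos_word s) (nseq j true ++ false :: b) = nseq (j + size s) true ++ false :: b.
Proof.
elim: s j => [|i s IH] j /= sorted_s lt_ij; first by rewrite addn0.
rewrite x_act_ones_lt // IH ?addSnnS //; first exact: path_sorted sorted_s.
by case: s sorted_s {IH} => //= i' s /andP[]; rewrite /normal_step; lia.
Qed.

Section NormalWordsActingAlike.

Context {s t : seq nat}.
Hypothesis sorted_s : sorted normal_step s.
Hypothesis sorted_t : sorted normal_step t.
Hypothesis act_st : act (pos_word s) =1 act (pos_word t).

Lemma size_normal_act_eq : size s = size t.
Proof.
pose j := (sumn s + sumn t).+1.
have := act_st (nseq j true ++ [:: false]).
rewrite act_normal_ones ?act_normal_ones //; last 2 first.
- by rewrite /j; case: (t) => //= k t'; lia.
- by rewrite /j; case: (s) => //= k s'; lia.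
by move=> /(congr1 size); rewrite !size_cat !size_nseq /=; lia.
Qed.

(* On 1^k 0 0 with k = head t > head s, t drops a letter while s only adds. *)
Lemma normal_act_head_le : head 0 t <= head 0 s.
Proof.
have size_st := size_normal_act_eq.
case def_s: s size_st => [|i s'] /=; first by case: (t).
case def_t: t => [|k t'] //= [size_st]; rewrite leqNgt; apply/negP => lt_ik.
have := act_st (nseq k true ++ [:: false; false]).
rewrite act_normal_ones //; last by rewrite def_s.
rewrite def_t /= x_act_ones_false_false => eq_act.
have := size_act_pos_word t' (nseq k true ++ [:: false]).
rewrite -eq_act def_s !size_cat !size_nseq /=; lia.
Qed.

End NormalWordsActingAlike.

Lemma normal_act_inj {s t : seq nat} :
  sorted normal_step s -> sorted normal_step t ->
  act (pos_word s) =1 act (pos_word t) -> s = t.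
Proof.
elim: s t => [|i s IH] [|k t] sorted_s sorted_t act_st //;
  move: (size_normal_act_eq sorted_s sorted_t act_st) => //= _.
have act_ts q := esym (act_st q).
have eq_ik : i = k.
  apply/eqP; rewrite eqn_leq.
  rewrite (normal_act_head_le sorted_s sorted_t act_st).
  by rewrite (normal_act_head_le sorted_t sorted_s act_ts).
subst k; congr (_ :: _); apply: IH.
- exact: path_sorted sorted_s.
- exact: path_sorted sorted_t.
- by move=> q; have := act_st (x_inv_act i q); rewrite /= x_inv_actK.
Qed.

Lemma not_sorted_split {T : Type} {r : rel T} {w : seq T} : ~~ sorted r w ->
  exists u a b v, w = u ++ a :: b :: v /\ ~~ r a b.
Proof.
elim: w => [|x [|y w] IH] //=.
case r_xy: (r x y) => /= not_sorted.
- have [u [a [b [v [-> not_r_ab]]]]] := IH not_sorted.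
  by exists (x :: u), a, b, v.
- by exists [::], x, y, w; rewrite r_xy.
Qed.

Lemma Feq_pos_word_swap u v a c : a < c ->
  Feq (pos_word (u ++ a :: c.+1 :: v)) (pos_word (u ++ c :: a :: v)).
Proof.
move=> lt_ac; apply: Feq_sym.
have := Feq_step (pos_word u) (pos_word v) (Frel_thompson lt_ac).
by rewrite /pos_word !map_cat.
Qed.

Lemma exists_normal_pos_word {w : seq nat} : all (fun i => 0 < i) w ->
  exists2 s, normal_seq s & Feq (pos_word w) (pos_word s).
Proof.
elim: {w}(sumn w).+1 {-2}w (ltnSn (sumn w)) => [|n IH] w // lt_wn pos_w.
case sorted_w: (sorted normal_step w).
  by exists w; [rewrite /normal_seq pos_w | apply: Feq_refl].
have [u [a [b [v [def_w]]]]] := not_sorted_split (negbT sorted_w).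
rewrite /normal_step -ltnNge => lt_a_predb.
have [c def_b] : exists c, b = c.+1 by exists b.-1; lia.
subst w b; have lt_ac : a < c by lia.
have sum_lt : sumn (u ++ c :: a :: v) < n.
  by move: lt_wn; rewrite !sumn_cat /=; lia.
have pos_w' : all (fun i => 0 < i) (u ++ c :: a :: v).
  by move: pos_w; rewrite !all_cat /= => /andP[-> /andP[-> ->]]; rewrite andbT; lia.
have [s normal_s eq_s] := IH _ sum_lt pos_w'.
by exists s => //; apply: Feq_trans eq_s; apply: Feq_pos_word_swap.
Qed.

Theorem theorem4p1p7 (f : word) :
  strongly_positive f ->
  exists! s : seq nat, normal_seq s /\ Feq f (pos_word s).
Proof.
move=> [w [pos_w eq_fw]].
have [s normal_s eq_ws] := exists_normal_pos_word pos_w.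
have eq_fs := Feq_trans eq_fw eq_ws.
exists s; split=> // t [normal_t eq_ft].
apply: normal_act_inj; first by case/andP: normal_s.
- by case/andP: normal_t.
- exact/Feq_act/(Feq_trans (Feq_sym eq_fs)).
Qed.
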